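(* Let $r\in(R_c,R_0)$ and $\mathcal{F}\in\mathbb{R}$, and define $\kappa(s;r)=2(\mathcal{F}-\sigma(s;r))-(r-R(s))^2$ for $s>s_0$. Then $s\mapsto\kappa(s;r)$ is decreasing on $(s_0,s_-(r))$, increasing on $(s_-(r),s_+(r))$, and decreasing to $-\infty$ on $(s_+(r),+\infty)$.
   Context: Let $\omega:[0,1]\to\mathbb{R}$ be continuous, $\Omega(p)=\int_0^p\omega$, $s_0=\sqrt{\max_{[0,1]}2\Omega}$. For $s>s_0$: $H(p;s)=\int_0^p(s^2-2\Omega(\tau))^{-1/2}d\tau$, $d(s)=H(1;s)$, $R(s)=\tfrac12s^2-\Omega(1)+d(s)$. Let $s_c>s_0$ satisfy $\int_0^1(s_c^2-2\Omega)^{-3/2}dp=1$; $R$ decreases on $(s_0,s_c)$, increases to $+\infty$ on $(s_c,\infty)$; $R_c=R(s_c)$, $R_0=\lim_{s\to s_0+}R(s)\in(R_c,+\infty]$; for $r\in(R_c,R_0)$, $s_-(r)<s_c<s_+(r)$ are the two roots of $R(s)=r$. Also $\sigma(s;r)=\int_0^1\big(\frac{1}{2H_p(p;s)^2}-H(p;s)-\Omega(p)+\Omega(1)+r\big)H_p(p;s)\,dp$. In the paper $\mathcal{F}$ is the flow force constant of a given solution, but the statement holds for any fixed real $\mathcal{F}$. *)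

From Stdlib Require Import Reals.
From Coquelicot Require Import Coquelicot.
Open Scope R_scope.

Definition Omega (omega : R -> R) (p : R) : R := RInt omega 0 p.

Definition Hp (omega : R -> R) (p s : R) : R := / sqrt (s ^ 2 - 2 * Omega omega p).

Definition H (omega : R -> R) (p s : R) : R := RInt (fun tau => Hp omega tau s) 0 p.

Definition d (omega : R -> R) (s : R) : R := H omega 1 s.

Definition Rfun (omega : R -> R) (s : R) : R :=
  s ^ 2 / 2 - Omega omega 1 + d omega s.

Definition sigma (omega : R -> R) (s r : R) : R :=
  RInt (fun p => (1 / (2 * (Hp omega p s) ^ 2) - H omega p s - Omega omega p
                  + Omega omega 1 + r) * Hp omega p s) 0 1.

Definition kappa (omega : R -> R) (F s r : R) : R :=
  2 * (F - sigma omega s r) - (r - Rfun omega s) ^ 2.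

From Pilot Require Import Defs.
From Stdlib Require Import Reals Lra Psatz.
From Coquelicot Require Import Coquelicot.
Open Scope R_scope.

(* Write D, J and I for the integrals over [0,1] of (s^2 - 2 Omega)^(-1/2),
   (s^2 - 2 Omega)^(1/2) and (s^2 - 2 Omega)^(-3/2), and c = Omega(1) + r - s^2/2.
   Since H is a primitive of H_p, sigma = J - D^2/2 + c D, and as R = s^2/2 - Omega(1) + D
   gives r - R = c - D, everything but J cancels: kappa = 2F - 2J - c^2.
   Differentiating under the integral sign, J' = s D and D' = -s I, hence
   kappa' = 2 s (r - R) and R' = s (1 - I).  As I decreases strictly and I(s_c) = 1,
   R decreases on (s_0, s_c) and increases on (s_c, oo), so R - r is positive on
   (s_0, s_-) and (s_+, oo) and negative on (s_-, s_+).  Finally J >= 0 gives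
   kappa <= 2F - c^2, which tends to -oo. *)

Lemma lt_sq_of_sqrt_lt (M s : R) : sqrt M < s -> M < s ^ 2.
Proof.
  intros Hs. pose proof (sqrt_pos M).
  destruct (Rle_lt_dec M 0) as [HM | HM]; [nra |].
  pose proof (sqrt_sqrt M (Rlt_le _ _ HM)). nra.
Qed.

Lemma pos_of_sqrt_lt (M s : R) : sqrt M < s -> 0 < s.
Proof. pose proof (sqrt_pos M). lra. Qed.

Lemma decr_function (f : R -> R) (a b : Rbar) (df : R -> R) :
  (forall x : R, Rbar_lt a x -> Rbar_lt x b -> is_derive f x (df x)) ->
  (forall x : R, Rbar_lt a x -> Rbar_lt x b -> df x < 0) ->
  forall x y : R, Rbar_lt a x -> x < y -> Rbar_lt y b -> f y < f x.
Proof.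
  intros Hd Hneg x y Hx Hxy Hy.
  cut (- f x < - f y); [lra |].
  apply (incr_function (fun x => - f x) a b (fun x => - df x)); auto.
  - intros z Hz1 Hz2. apply (is_derive_opp f). auto.
  - intros z Hz1 Hz2. specialize (Hneg z Hz1 Hz2). lra.
Qed.

Lemma is_lim_sub_sq_sub_half_sq (a b : R) :
  is_lim (fun s => a - (b - s ^ 2 / 2) ^ 2) p_infty m_infty.
Proof.
  intros P [N HN]. exists (sqrt (2 * (Rabs b + Rabs (a - N) + 1))).
  intros s Hs. apply HN.
  pose proof (lt_sq_of_sqrt_lt _ _ Hs).
  pose proof (Rle_abs b). pose proof (Rle_abs (a - N)).
  assert (Ht : Rabs (a - N) + 1 < s ^ 2 / 2 - b) by lra.
  replace ((b - s ^ 2 / 2) ^ 2) with ((s ^ 2 / 2 - b) ^ 2) by ring.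
  revert Ht. generalize (s ^ 2 / 2 - b). intros t Ht. nra.
Qed.

Lemma is_RInt_mul_derive (F f : R -> R) (a b : R) :
  (forall t, is_derive F t (f t)) -> (forall t, continuous f t) ->
  is_RInt (fun p => F p * f p) a b ((F b ^ 2 - F a ^ 2) / 2).
Proof.
  intros HF Hf.
  replace ((F b ^ 2 - F a ^ 2) / 2) with (minus (F b ^ 2 / 2) (F a ^ 2 / 2))
    by (unfold minus, plus, opp; simpl; lra).
  apply (is_RInt_derive (V := R_CompleteNormedModule) (fun p => F p ^ 2 / 2)).
  - intros x _. auto_derive; [eexists; apply HF |].
    replace (Derive (fun y => F y) x) with (f x) by (symmetry; apply is_derive_unique, HF). field.
  - intros x _. apply (continuous_mult (K := R_AbsRing) F f); [| apply Hf].
    apply (ex_derive_continuous (K := R_AbsRing) (V := R_NormedModule)). eexists. apply HF.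
Qed.

Lemma is_derive_RInt_continuous (f : R -> R) (a x : R) :
  (forall t, continuous f t) -> is_derive (RInt f a) x (f x).
Proof.
  intros Hf. apply (is_derive_RInt (V := R_NormedModule) f (RInt f a) a); [| apply Hf].
  apply filter_forall. intros c. apply (RInt_correct (V := R_CompleteNormedModule)).
  apply (ex_RInt_continuous (V := R_CompleteNormedModule)). auto.
Qed.

Lemma is_RInt_RInt_mul (f : R -> R) (a b : R) :
  (forall t, continuous f t) ->
  is_RInt (fun p => RInt f a p * f p) a b (RInt f a b ^ 2 / 2).
Proof.
  intros Hf.
  replace (RInt f a b ^ 2 / 2) with ((RInt f a b ^ 2 - RInt f a a ^ 2) / 2).
  - apply is_RInt_mul_derive; auto. intros t. now apply is_derive_RInt_continuous.
  - rewrite (RInt_point (V := R_CompleteNormedModule)). change (zero : R) with 0. field.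
Qed.

Lemma is_derive_sqrt_pos (u : R) : 0 < u -> is_derive sqrt u (/ 2 * / sqrt u).
Proof. intros Hu. pose proof (sqrt_lt_R0 u Hu). auto_derive; [lra | field; lra]. Qed.

Lemma is_derive_inv_sqrt (u : R) :
  0 < u -> is_derive (fun u => / sqrt u) u (- / 2 * / sqrt u ^ 3).
Proof.
  intros Hu. pose proof (sqrt_lt_R0 u Hu). pose proof (sqrt_sqrt u (Rlt_le _ _ Hu)).
  auto_derive; [repeat split; lra | field; lra].
Qed.

Lemma continuous_inv_sqrt (u : R) : 0 < u -> continuous (fun u => / sqrt u) u.
Proof.
  intros Hu. apply (ex_derive_continuous (K := R_AbsRing) (V := R_NormedModule)).
  eexists. now apply is_derive_inv_sqrt.
Qed.

Lemma continuous_inv_sqrt_pow (n : nat) (u : R) :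
  0 < u -> continuous (fun u => / sqrt u ^ n) u.
Proof.
  intros Hu. pose proof (sqrt_lt_R0 u Hu).
  apply (ex_derive_continuous (K := R_AbsRing) (V := R_NormedModule)).
  auto_derive. repeat split; try lra. apply pow_nonzero. lra.
Qed.


Section Mean.

Variables (g : R -> R) (M : R).
Hypothesis g_continuous : forall t, continuous g t.
Hypothesis g_le : forall t, g t <= M.

Definition mean (Q : R -> R) (s : R) : R := RInt (fun t => Q (s ^ 2 - g t)) 0 1.

Lemma sq_sub_pos (s t : R) : sqrt M < s -> 0 < s ^ 2 - g t.
Proof. intros Hs. pose proof (lt_sq_of_sqrt_lt M s Hs). pose proof (g_le t). lra. Qed.

Lemma continuous_comp_sq_sub (Q : R -> R) (s t : R) :
  (forall u, 0 < u -> continuous Q u) -> sqrt M < s ->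
  continuous (fun t => Q (s ^ 2 - g t)) t.
Proof.
  intros HQ Hs. apply (continuous_comp (fun t => s ^ 2 - g t) Q).
  - apply (continuous_minus (fun _ => s ^ 2) g); [apply continuous_const | apply g_continuous].
  - apply HQ, sq_sub_pos, Hs.
Qed.

Lemma ex_RInt_comp_sq_sub (Q : R -> R) (s a b : R) :
  (forall u, 0 < u -> continuous Q u) -> sqrt M < s ->
  ex_RInt (fun t => Q (s ^ 2 - g t)) a b.
Proof.
  intros HQ Hs. apply (ex_RInt_continuous (V := R_CompleteNormedModule)).
  intros t _. now apply continuous_comp_sq_sub.
Qed.

Lemma mean_scal (k : R) (Q : R -> R) (s : R) :
  (forall u, 0 < u -> continuous Q u) -> sqrt M < s ->
  mean (fun u => k * Q u) s = k * mean Q s.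
Proof.
  intros HQ Hs. apply (RInt_scal (V := R_CompleteNormedModule)).
  now apply ex_RInt_comp_sq_sub.
Qed.

Lemma is_derive_mean (Q dQ : R -> R) (s : R) :
  (forall u, 0 < u -> is_derive Q u (dQ u)) ->
  (forall u, 0 < u -> continuous dQ u) -> sqrt M < s ->
  is_derive (mean Q) s (2 * s * mean dQ s).
Proof.
  intros HQ HdQ Hs.
  assert (HQc : forall u, 0 < u -> continuous Q u).
  { intros u Hu. apply (ex_derive_continuous (K := R_AbsRing) (V := R_NormedModule)).
    eexists. now apply HQ. }
  assert (Hd : forall u t, sqrt M < u ->
            is_derive (fun z => Q (z ^ 2 - g t)) u (2 * u * dQ (u ^ 2 - g t))).
  { intros u t Hu.
    apply (is_derive_comp Q (fun z => z ^ 2 - g t)); [now apply HQ, sq_sub_pos |].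
    auto_derive; [easy | ring]. }
  rewrite <- mean_scal by easy. unfold mean.
  rewrite <- (RInt_ext (fun t => Derive (fun z => Q (z ^ 2 - g t)) s)).
  2: { intros t _. now apply is_derive_unique, Hd. }
  apply (is_derive_RInt_param (fun z t => Q (z ^ 2 - g t))).
  - apply (filter_imp (fun u => sqrt M < u)); [| now apply open_gt].
    intros u Hu t _. eexists. now apply Hd.
  - intros t _.
    apply continuity_2d_pt_ext_loc with (f := fun u v => 2 * u * dQ (u * u - g v)).
    + exists (mkposreal _ (proj2 (Rlt_0_minus _ _) Hs)). intros u v Hu _.
      apply Rabs_lt_between in Hu. simpl in Hu.
      replace (u * u) with (u ^ 2) by ring.
      symmetry. apply is_derive_unique, Hd. lra.
    + apply continuity_2d_pt_mult.
      * apply continuity_2d_pt_mult; [apply continuity_2d_pt_const | apply continuity_2d_pt_id1].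
      * apply (continuity_1d_2d_pt_comp dQ (fun u v => u * u - g v)).
        -- apply continuity_pt_filterlim, HdQ. replace (s * s) with (s ^ 2) by ring.
           now apply sq_sub_pos.
        -- apply continuity_2d_pt_minus.
           ++ apply continuity_2d_pt_mult; apply continuity_2d_pt_id1.
           ++ apply (continuity_1d_2d_pt_comp g (fun u v => v)); [| apply continuity_2d_pt_id2].
              apply continuity_pt_filterlim, g_continuous.
  - apply (filter_imp (fun u => sqrt M < u)); [| now apply open_gt].
    intros u Hu. now apply ex_RInt_comp_sq_sub.
Qed.

Lemma mean_decreasing (Q : R -> R) (a b : R) :
  (forall u, 0 < u -> continuous Q u) -> (forall u v, 0 < u < v -> Q v < Q u) ->
  sqrt M < a -> a < b -> mean Q b < mean Q a.
Proof.
  intros HQc HQ Ha Hab. unfold mean.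
  apply RInt_lt; [lra | intros; apply continuous_comp_sq_sub; auto; lra ..|].
  intros t _. apply HQ. split; [now apply sq_sub_pos |].
  pose proof (pos_of_sqrt_lt M a Ha). nra.
Qed.

Lemma is_derive_mean_sqrt (s : R) :
  sqrt M < s -> is_derive (mean sqrt) s (s * mean (fun u => / sqrt u) s).
Proof.
  intros Hs.
  replace (s * _) with (2 * s * mean (fun u => / 2 * / sqrt u) s).
  - apply is_derive_mean; [apply is_derive_sqrt_pos | | exact Hs].
    intros u Hu. apply (continuous_scal_r (V := R_NormedModule)), continuous_inv_sqrt, Hu.
  - rewrite mean_scal; [field | apply continuous_inv_sqrt | exact Hs].
Qed.

Lemma is_derive_mean_inv_sqrt (s : R) :
  sqrt M < s ->
  is_derive (mean (fun u => / sqrt u)) s (- s * mean (fun u => / sqrt u ^ 3) s).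
Proof.
  intros Hs.
  replace (- s * _) with (2 * s * mean (fun u => - / 2 * / sqrt u ^ 3) s).
  - apply is_derive_mean; [apply is_derive_inv_sqrt | | exact Hs].
    intros u Hu. apply (continuous_scal_r (V := R_NormedModule)), continuous_inv_sqrt_pow, Hu.
  - rewrite mean_scal; [field | apply continuous_inv_sqrt_pow | exact Hs].
Qed.

Lemma mean_inv_sqrt_cube_decreasing (a b : R) :
  sqrt M < a -> a < b -> mean (fun u => / sqrt u ^ 3) b < mean (fun u => / sqrt u ^ 3) a.
Proof.
  apply mean_decreasing; [apply continuous_inv_sqrt_pow |].
  intros u v Huv. pose proof (sqrt_lt_R0 u (proj1 Huv)).
  pose proof (sqrt_lt_1_alt u v (conj (Rlt_le _ _ (proj1 Huv)) (proj2 Huv))).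
  apply Rinv_lt_contravar; [apply Rmult_lt_0_compat; apply pow_lt; lra |].
  assert (0 < sqrt u * sqrt v) by nra. nra.
Qed.

Lemma mean_sqrt_nonneg (s : R) : sqrt M < s -> 0 <= mean sqrt s.
Proof.
  intros Hs. apply RInt_ge_0; [lra | |].
  - apply ex_RInt_comp_sq_sub; [intros; apply continuous_sqrt | exact Hs].
  - intros t _. apply sqrt_pos.
Qed.

End Mean.

Definition clamp01 (t : R) : R := Rmax 0 (Rmin 1 t).

Lemma clamp01_bounds (t : R) : 0 <= clamp01 t <= 1.
Proof. unfold clamp01, Rmax, Rmin; repeat destruct Rle_dec; lra. Qed.

Lemma clamp01_id (t : R) : 0 <= t <= 1 -> clamp01 t = t.
Proof. intros; unfold clamp01, Rmax, Rmin; repeat destruct Rle_dec; lra. Qed.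

Lemma continuous_clamp01 (t : R) : continuous clamp01 t.
Proof.
  apply filterlim_locally. intros eps. exists eps. intros y Hy.
  change (Rabs (clamp01 y - clamp01 t) < eps). change (Rabs (y - t) < eps) in Hy.
  eapply Rle_lt_trans; [| exact Hy].
  unfold clamp01, Rmax, Rmin, Rabs; repeat destruct Rle_dec; repeat destruct Rcase_abs; lra.
Qed.

Lemma continuous_comp_clamp01 (f : R -> R) :
  (forall x, 0 <= x <= 1 ->
     filterlim f (within (fun y => 0 <= y <= 1) (locally x)) (locally (f x))) ->
  forall t, continuous (fun t => f (clamp01 t)) t.
Proof.
  intros Hf t P HP. unfold filtermap.
  apply (filter_imp (fun y => 0 <= clamp01 y <= 1 -> P (f (clamp01 y)))).
  - intros y Hy. apply Hy, clamp01_bounds.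
  - exact (continuous_clamp01 t _ (Hf _ (clamp01_bounds t) P HP)).
Qed.

(* [2 Omega], frozen outside [0,1]: differentiating under the integral sign needs
   continuity on a neighbourhood of the endpoints. *)
Definition two_Omega (omega : R -> R) (t : R) : R := 2 * Omega omega (clamp01 t).

Lemma two_Omega_eq (omega : R -> R) (p : R) :
  0 <= p <= 1 -> two_Omega omega p = 2 * Omega omega p.
Proof. intros Hp. unfold two_Omega. now rewrite clamp01_id. Qed.

Lemma continuous_two_Omega (omega : R -> R) :
  (forall x, 0 <= x <= 1 ->
     filterlim omega (within (fun y => 0 <= y <= 1) (locally x)) (locally (omega x))) ->
  forall t, continuous (two_Omega omega) t.
Proof.
  intros Homega t.
  set (W := RInt (fun y => omega (clamp01 y)) 0).
  assert (HW : forall p, 0 <= p <= 1 -> Omega omega p = W p).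
  { intros p Hp. apply RInt_ext. intros y Hy.
    rewrite Rmin_left, Rmax_right in Hy by lra. rewrite clamp01_id; lra. }
  apply (continuous_ext (fun t => 2 * W (clamp01 t))).
  { intros y. unfold two_Omega. now rewrite HW by apply clamp01_bounds. }
  apply (continuous_scal_r (V := R_NormedModule) 2 (fun t => W (clamp01 t))).
  apply (continuous_comp clamp01 W); [apply continuous_clamp01 |].
  apply (ex_derive_continuous (K := R_AbsRing) (V := R_NormedModule)). eexists.
  apply is_derive_RInt_continuous, continuous_comp_clamp01, Homega.
Qed.

Lemma two_Omega_le (omega : R -> R) (M : R) :
  (forall p, 0 <= p <= 1 -> 2 * Omega omega p <= M) -> forall t, two_Omega omega t <= M.
Proof. intros HM t. apply HM, clamp01_bounds. Qed.

Lemma mean_two_Omega (omega Q : R -> R) (s : R) :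
  mean (two_Omega omega) Q s = RInt (fun p => Q (s ^ 2 - 2 * Omega omega p)) 0 1.
Proof.
  apply RInt_ext. intros p Hp. rewrite Rmin_left, Rmax_right in Hp by lra.
  rewrite two_Omega_eq; lra.
Qed.

Lemma Rfun_eq (omega : R -> R) (s : R) :
  Rfun omega s = s ^ 2 / 2 - Omega omega 1 + mean (two_Omega omega) (fun u => / sqrt u) s.
Proof. unfold Rfun, d, H, Hp. now rewrite mean_two_Omega. Qed.

Section Profile.

Variables (omega : R -> R) (M : R).
Hypothesis omega_continuous : forall x, 0 <= x <= 1 ->
  filterlim omega (within (fun y => 0 <= y <= 1) (locally x)) (locally (omega x)).
Hypothesis Omega_le : forall p, 0 <= p <= 1 -> 2 * Omega omega p <= M.

Let g := two_Omega omega.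
Let g_continuous := continuous_two_Omega omega omega_continuous.
Let g_le := two_Omega_le omega M Omega_le.

Lemma H_eq (p s : R) :
  0 <= p <= 1 -> H omega p s = RInt (fun t => / sqrt (s ^ 2 - g t)) 0 p.
Proof.
  intros Hp01. apply RInt_ext. intros t Ht. rewrite Rmin_left, Rmax_right in Ht by lra.
  unfold Hp, g. rewrite two_Omega_eq; lra.
Qed.

Lemma sigma_eq (s r : R) :
  sqrt M < s ->
  Defs.sigma omega s r = mean g sqrt s - mean g (fun u => / sqrt u) s ^ 2 / 2
                    + (Omega omega 1 + r - s ^ 2 / 2) * mean g (fun u => / sqrt u) s.
Proof.
  intros Hs.
  set (A := fun t => / sqrt (s ^ 2 - g t)). set (c := Omega omega 1 + r - s ^ 2 / 2).
  assert (HA : forall t, continuous A t).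
  { intros t. apply (continuous_comp_sq_sub g M g_continuous g_le (fun u => / sqrt u));
      [apply continuous_inv_sqrt | exact Hs]. }
  unfold Defs.sigma. apply is_RInt_unique.
  apply (is_RInt_ext (fun p => sqrt (s ^ 2 - g p) - RInt A 0 p * A p + c * A p)).
  - intros p Hp01. rewrite Rmin_left, Rmax_right in Hp01 by lra.
    rewrite H_eq by lra. unfold Hp.
    rewrite <- (two_Omega_eq omega p) by lra. fold g.
    replace (Omega omega p) with (g p / 2) by (unfold g; rewrite two_Omega_eq; lra).
    pose proof (sq_sub_pos g M g_le s p Hs) as Hu.
    pose proof (sqrt_lt_R0 _ Hu). pose proof (sqrt_sqrt _ (Rlt_le _ _ Hu)).
    unfold A, c. set (h := RInt _ 0 p). set (q := sqrt (s ^ 2 - g p)) in *.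
    replace (g p) with (s ^ 2 - q * q) by lra.
    (* [field] only recognises equations stated over [R] itself. *)
    match goal with |- ?x = ?y => change (@eq R x y) end. field. lra.
  - apply (is_RInt_plus (V := R_NormedModule)).
    + apply (is_RInt_minus (V := R_NormedModule)); [| now apply is_RInt_RInt_mul].
      apply (RInt_correct (V := R_CompleteNormedModule)).
      apply (ex_RInt_comp_sq_sub g M g_continuous g_le sqrt);
        [intros; apply continuous_sqrt | exact Hs].
    + apply (is_RInt_scal (V := R_NormedModule)).
      apply (RInt_correct (V := R_CompleteNormedModule)).
      apply (ex_RInt_comp_sq_sub g M g_continuous g_le (fun u => / sqrt u));
        [apply continuous_inv_sqrt | exact Hs].
Qed.

Lemma kappa_eq (F s r : R) :
  sqrt M < s ->
  kappa omega F s r = 2 * F - 2 * mean g sqrt s - (Omega omega 1 + r - s ^ 2 / 2) ^ 2.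
Proof. intros Hs. unfold kappa. rewrite sigma_eq, Rfun_eq by exact Hs. fold g. field. Qed.

Lemma is_derive_Rfun (s : R) :
  sqrt M < s -> is_derive (Rfun omega) s (s * (1 - mean g (fun u => / sqrt u ^ 3) s)).
Proof.
  intros Hs.
  apply (is_derive_ext (fun s => s ^ 2 / 2 - Omega omega 1 + mean g (fun u => / sqrt u) s)).
  { intros t. now rewrite Rfun_eq. }
  pose proof (is_derive_mean_inv_sqrt g M g_continuous g_le s Hs) as HD.
  auto_derive; [eexists; exact HD |].
  erewrite (is_derive_unique _ s) by exact HD. field.
Qed.

Lemma is_derive_kappa (F r s : R) :
  sqrt M < s -> is_derive (fun s => kappa omega F s r) s (2 * s * (r - Rfun omega s)).
Proof.
  intros Hs.
  apply (is_derive_ext_loc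
           (fun s => 2 * F - 2 * mean g sqrt s - (Omega omega 1 + r - s ^ 2 / 2) ^ 2)).
  { apply (filter_imp (fun u => sqrt M < u)); [| now apply open_gt].
    intros u Hu. now rewrite kappa_eq. }
  pose proof (is_derive_mean_sqrt g M g_continuous g_le s Hs) as HJ.
  auto_derive; [eexists; exact HJ |].
  erewrite (is_derive_unique _ s) by exact HJ. rewrite Rfun_eq. fold g. field.
Qed.

Lemma is_lim_kappa (F r : R) : is_lim (fun s => kappa omega F s r) p_infty m_infty.
Proof.
  apply (is_lim_le_m_loc (fun s => 2 * F - (Omega omega 1 + r - s ^ 2 / 2) ^ 2)).
  - exists (sqrt M). intros s Hs. rewrite kappa_eq by exact Hs.
    pose proof (mean_sqrt_nonneg g M g_continuous g_le s Hs). lra.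
  - apply is_lim_sub_sq_sub_half_sq.
Qed.

Lemma Rfun_decreasing (sc : R) :
  mean g (fun u => / sqrt u ^ 3) sc = 1 ->
  forall s1 s2, sqrt M < s1 -> s1 < s2 -> s2 < sc -> Rfun omega s2 < Rfun omega s1.
Proof.
  intros Hsc s1 s2 H1 H12 H2.
  apply (decr_function (Rfun omega) (sqrt M) sc
           (fun s => s * (1 - mean g (fun u => / sqrt u ^ 3) s))); auto.
  - intros s Hs _. now apply is_derive_Rfun.
  - intros s Hs Hs'. simpl in Hs, Hs'. pose proof (pos_of_sqrt_lt M s Hs).
    pose proof (mean_inv_sqrt_cube_decreasing g M g_continuous g_le s sc Hs Hs'). nra.
Qed.

Lemma Rfun_increasing (sc : R) :
  sqrt M < sc -> mean g (fun u => / sqrt u ^ 3) sc = 1 ->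
  forall s1 s2, sc < s1 -> s1 < s2 -> Rfun omega s1 < Rfun omega s2.
Proof.
  intros Hsc0 Hsc s1 s2 H1 H12.
  apply (incr_function (Rfun omega) sc p_infty
           (fun s => s * (1 - mean g (fun u => / sqrt u ^ 3) s))); auto.
  - intros s Hs _. apply is_derive_Rfun. simpl in Hs. lra.
  - intros s Hs _. simpl in Hs. pose proof (pos_of_sqrt_lt M sc Hsc0).
    pose proof (mean_inv_sqrt_cube_decreasing g M g_continuous g_le sc s Hsc0 Hs). nra.
  - exact I.
Qed.

Lemma Rfun_sub_sign (sc sm sp r : R) :
  sqrt M < sm < sc -> sc < sp -> mean g (fun u => / sqrt u ^ 3) sc = 1 ->
  Rfun omega sc < r -> Rfun omega sm = r -> Rfun omega sp = r ->
  (forall s, sqrt M < s < sm \/ sp < s -> r < Rfun omega s) /\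
  (forall s, sm < s < sp -> Rfun omega s < r).
Proof.
  intros Hsm Hsp Hsc Hr HRsm HRsp.
  pose proof (Rfun_decreasing sc Hsc) as Hdecr.
  assert (Hincr := Rfun_increasing sc ltac:(lra) Hsc).
  split.
  - intros s [Hs | Hs]; [rewrite <- HRsm; apply Hdecr | rewrite <- HRsp; apply Hincr]; lra.
  - intros s Hs. destruct (Rtotal_order s sc) as [Hs' | [-> | Hs']]; [| exact Hr |].
    + rewrite <- HRsm. apply Hdecr; lra.
    + rewrite <- HRsp. apply Hincr; lra.
Qed.

End Profile.

Theorem lemma3p7
  (omega : R -> R)
  (* omega continuous on [0,1] (continuity of the restriction to [0,1]) *)
  (Homega : forall x, 0 <= x <= 1 ->
     filterlim omega (within (fun y => 0 <= y <= 1) (locally x)) (locally (omega x)))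
  (* M = max_{[0,1]} 2 Omega, s0 = sqrt M *)
  (M s0 : R)
  (HMattained : exists p, 0 <= p <= 1 /\ 2 * Omega omega p = M)
  (HMmax : forall p, 0 <= p <= 1 -> 2 * Omega omega p <= M)
  (Hs0 : s0 = sqrt M)
  (* s_c > s0 with int_0^1 (s_c^2 - 2 Omega)^(-3/2) = 1 *)
  (sc : R) (Hsc0 : s0 < sc)
  (Hsc : RInt (fun p => / (sqrt (sc ^ 2 - 2 * Omega omega p)) ^ 3) 0 1 = 1)
  (* R_c = R(s_c), R_0 = lim_{s -> s0+} R(s) in (R_c, +oo] *)
  (Rc : R) (HRc : Rc = Rfun omega sc)
  (R0 : Rbar) (HR0 : filterlim (Rfun omega) (at_right s0) (Rbar_locally R0))
  (* r in (R_c, R_0) *)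
  (r : R) (Hr1 : Rc < r) (Hr2 : Rbar_lt r R0)
  (* s_-(r) < s_c < s_+(r), the two roots of R(s) = r *)
  (sm sp : R) (Hsm : s0 < sm < sc) (Hsp : sc < sp)
  (HRsm : Rfun omega sm = r) (HRsp : Rfun omega sp = r)
  (F : R) :
  (forall s1 s2, s0 < s1 -> s1 < s2 -> s2 < sm ->
     kappa omega F s2 r < kappa omega F s1 r) /\
  (forall s1 s2, sm < s1 -> s1 < s2 -> s2 < sp ->
     kappa omega F s1 r < kappa omega F s2 r) /\
  (forall s1 s2, sp < s1 -> s1 < s2 ->
     kappa omega F s2 r < kappa omega F s1 r) /\
  is_lim (fun s => kappa omega F s r) p_infty m_infty.
Proof.
  (* Only the sign of R - r matters. *)
  subst s0 Rc.
  assert (HIsc : mean (two_Omega omega) (fun u => / sqrt u ^ 3) sc = 1)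
    by now rewrite mean_two_Omega.
  destruct (Rfun_sub_sign omega M Homega HMmax sc sm sp r Hsm Hsp HIsc Hr1 HRsm HRsp)
    as [Habove Hbelow].
  set (kappa_r := fun s => kappa omega F s r).
  set (dkappa := fun s => 2 * s * (r - Rfun omega s)).
  assert (Hd : forall s, sqrt M < s -> is_derive kappa_r s (dkappa s))
    by (intros; now apply (is_derive_kappa omega M)).
  assert (Hneg : forall s, sqrt M < s -> r < Rfun omega s -> dkappa s < 0)
    by (intros s Hs; pose proof (pos_of_sqrt_lt M s Hs); unfold dkappa; nra).
  assert (Hpos : forall s, sqrt M < s -> Rfun omega s < r -> dkappa s > 0)
    by (intros s Hs; pose proof (pos_of_sqrt_lt M s Hs); unfold dkappa; nra).
  split; [| split; [| split]].
  - apply (decr_function kappa_r (sqrt M) sm dkappa); simpl; intros s Hs1 Hs2;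
      [apply Hd | apply Hneg, Habove]; lra.
  - apply (incr_function kappa_r sm sp dkappa); simpl; intros s Hs1 Hs2;
      [apply Hd | apply Hpos, Hbelow]; lra.
  - intros s1 s2 Hs1 Hs12.
    apply (decr_function kappa_r sp p_infty dkappa); simpl; auto; intros s Hs _;
      [apply Hd | apply Hneg, Habove]; lra.
  - now apply (is_lim_kappa omega M).
Qed.
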